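(* There is an absolute constant $C_0>0$ such that for every nonconstant harmonic function $u:\mathbb{C}\to\mathbb{R}$ there exists a sequence of discs $D(z_n,r_n)$ ($z_n\in\mathbb{C}$, $r_n>0$) with $u(z_n)=0$ and $M(|u|,z_n,r_n)\le C_0\,M(u,z_n,\tfrac34 r_n)$ for all $n$, and $\lim_{n\to\infty}M(u,z_n,r_n)=+\infty$.
   Context: For a real function $h$, $M(h,z,r)=\sup_{D(z,r)}h$ denotes the supremum of $h$ over the disc $D(z,r)$ of center $z$ and radius $r$. *)

From Stdlib Require Import Reals.
From Coquelicot Require Import Coquelicot.
Open Scope R_scope.

(* The complex plane C is identified with R*R (z = x + i y  <->  (x,y)). *)

Definition dx (u : R * R -> R) : R * R -> R :=
  fun p => Derive (fun t => u (t, snd p)) (fst p).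
Definition dy (u : R * R -> R) : R * R -> R :=
  fun p => Derive (fun t => u (fst p, t)) (snd p).

Definition has_partials (u : R * R -> R) : Prop :=
  forall p : R * R,
    ex_derive (fun t => u (t, snd p)) (fst p) /\
    ex_derive (fun t => u (fst p, t)) (snd p).

Definition C2 (u : R * R -> R) : Prop :=
  has_partials u /\ has_partials (dx u) /\ has_partials (dy u) /\
  forall p : R * R,
    continuous u p /\ continuous (dx u) p /\ continuous (dy u) p /\
    continuous (dx (dx u)) p /\ continuous (dy (dx u)) p /\
    continuous (dx (dy u)) p /\ continuous (dy (dy u)) p.

Definition harmonic (u : R * R -> R) : Prop :=
  C2 u /\ forall p : R * R, dx (dx u) p + dy (dy u) p = 0.

Definition in_disc (z : R * R) (r : R) (w : R * R) : Prop :=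
  sqrt ((fst w - fst z) ^ 2 + (snd w - snd z) ^ 2) < r.

Definition M (h : R * R -> R) (z : R * R) (r : R) : Rbar :=
  Lub_Rbar (fun y => exists w, in_disc z r w /\ y = h w).

From Stdlib Require Import Reals Lra Psatz Classical ClassicalEpsilon Rgeom.
From Coquelicot Require Import Coquelicot.
Open Scope R_scope.

(* Harmonic functions have the mean value property on circles; differentiating it in the
   centre and in the radius gives  int_0^2pi cos t v(c + s e^it) dt = pi s dx v(c),  and the
   same with [sin] and [dy].  For harmonic v >= 0 on D(c, s) the left side is at most
   int_0^2pi v(c + s e^it) dt = 2 pi v(c), so |dx v(c)|, |dy v(c)| <= (2/s) v(c).  Integrating
   this logarithmic gradient bound along two axis-parallel segments gives a Harnack inequality,
   and letting s -> oo gives Liouville's theorem for one-sided bounded harmonic functions;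
   hence a nonconstant u has zeros and is unbounded above and below.

   Given a zero z0 and a point q with |u q| large, take R0 = 2|q - z0| + 1 and a point p at
   which the weight |u w| (R0 - |w - z0|)^1200 exceeds half its supremum over D(z0, R0).  With
   d = R0 - |p - z0|, this gives |u| <= 2^1201 |u p| on D(p, d/2) and |u q| <= 2^1201 |u p|.
   If u had no zero in D(p, d/16), Harnack's inequality for |u| there would make the weight at
   the point d/64 closer to z0 larger than twice the weight at p; so u vanishes at some z
   with |z - p| < d/16.  Finally, Harnack's inequality for S - u >= 0, where
   S = M(u, z, d/4), at the zero z gives |u p| <= 9 S; so the discs D(z, d/3) satisfy
   M(|u|, z, d/3) <= 9 * 2^1201 * M(u, z, d/4), and M(u, z, d/3) >= |u p| / 9 is large. *)

(* Stated with [Rplus], [Rmult], ... so that they unify with goals about real functions,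
   which Coquelicot's statements in terms of [plus], [mult], ... do not. *)
Section ContinuityR.
Context {U : UniformSpace}.

Lemma continuous_plusR (f g : U -> R) x :
  continuous f x -> continuous g x -> continuous (fun t => f t + g t) x.
Proof. intros; apply (continuous_plus f g); auto. Qed.

Lemma continuous_minusR (f g : U -> R) x :
  continuous f x -> continuous g x -> continuous (fun t => f t - g t) x.
Proof. intros; apply (continuous_minus f g); auto. Qed.

Lemma continuous_multR (f g : U -> R) x :
  continuous f x -> continuous g x -> continuous (fun t => f t * g t) x.
Proof. intros; apply (continuous_mult f g); auto. Qed.

Lemma continuous_oppR (f : U -> R) x : continuous f x -> continuous (fun t => - f t) x.
Proof. intros; apply (continuous_opp f); auto. Qed.

Lemma continuous_cos_comp (f : U -> R) x : continuous f x -> continuous (fun t => cos (f t)) x.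
Proof. intros; apply (continuous_comp f cos); auto; apply continuous_cos. Qed.

Lemma continuous_sin_comp (f : U -> R) x : continuous f x -> continuous (fun t => sin (f t)) x.
Proof. intros; apply (continuous_comp f sin); auto; apply continuous_sin. Qed.

Lemma continuous_comp_pair (f g : U -> R) (h : R * R -> R) x :
  continuous f x -> continuous g x -> continuous h (f x, g x) ->
  continuous (fun t => h (f t, g t)) x.
Proof.
  intros Hf Hg Hh. apply (continuous_comp_2 f g (fun a b => h (a, b))); auto.
  eapply continuous_ext; [| exact Hh]. intros [a b]; reflexivity.
Qed.

End ContinuityR.

Ltac auto_cont := repeat match goal with
  | |- continuous (fun _ => ?c) _ => apply continuous_const
  | |- continuous (fun x => x) _ => apply continuous_id
  | |- continuous (fun x => @?a x + @?b x) _ => apply (continuous_plusR a b)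
  | |- continuous (fun x => @?a x - @?b x) _ => apply (continuous_minusR a b)
  | |- continuous (fun x => @?a x * @?b x) _ => apply (continuous_multR a b)
  | |- continuous (fun x => - @?a x) _ => apply (continuous_oppR a)
  | |- continuous (fun x => cos (@?a x)) _ => apply (continuous_cos_comp a)
  | |- continuous (fun x => sin (@?a x)) _ => apply (continuous_sin_comp a)
  | |- continuous (fun x => fst x) (_, _) => apply continuous_fst
  | |- continuous (fun x => snd x) (_, _) => apply continuous_snd
  | |- continuous (fun x => ?h (@?a x, @?b x)) _ => apply (continuous_comp_pair a b h)
  end; auto.

Lemma is_derive_eq (f : R -> R) (x a b : R) : is_derive f x a -> a = b -> is_derive f x b.
Proof. intros H <-; exact H. Qed.

Lemma is_derive_plusR (f g : R -> R) (x a b : R) :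
  is_derive f x a -> is_derive g x b -> is_derive (fun t => f t + g t) x (a + b).
Proof. intros; apply (is_derive_plus f g); auto. Qed.

Lemma is_derive_minusR (f g : R -> R) (x a b : R) :
  is_derive f x a -> is_derive g x b -> is_derive (fun t => f t - g t) x (a - b).
Proof. intros; apply (is_derive_minus f g); auto. Qed.

Lemma is_derive_multR (f g : R -> R) (x a b : R) :
  is_derive f x a -> is_derive g x b -> is_derive (fun t => f t * g t) x (a * g x + f x * b).
Proof. intros; apply (is_derive_mult f g); auto. intros; apply Rmult_comm. Qed.

Lemma is_derive_scalR (f : R -> R) (c x a : R) :
  is_derive f x a -> is_derive (fun t => c * f t) x (c * a).
Proof. intros; apply is_derive_scal; auto. Qed.

Lemma is_derive_constR (c x : R) : is_derive (fun _ : R => c) x 0.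
Proof. apply (is_derive_const (K := R_AbsRing) (V := R_NormedModule)). Qed.

Lemma is_derive_idR (x : R) : is_derive (fun t : R => t) x 1.
Proof. apply (is_derive_id (K := R_AbsRing)). Qed.

Lemma is_derive_continuity_pt (f : R -> R) (x l : R) : is_derive f x l -> continuity_pt f x.
Proof.
  intros H. apply continuity_pt_filterlim.
  apply (ex_derive_continuous (V := R_NormedModule)). exists l; exact H.
Qed.

Lemma ex_RInt_cont (f : R -> R) a b : (forall x : R, continuous f x) -> ex_RInt f a b.
Proof. intros H; apply (ex_RInt_continuous (V := R_CompleteNormedModule)); auto. Qed.

Ltac ex_RInt_auto := apply ex_RInt_cont; intro; auto_cont.

Lemma RInt_plusR (f g : R -> R) a b : ex_RInt f a b -> ex_RInt g a b ->
  RInt (fun t => f t + g t) a b = RInt f a b + RInt g a b.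
Proof. intros; apply (RInt_plus f g); auto. Qed.

Lemma RInt_minusR (f g : R -> R) a b : ex_RInt f a b -> ex_RInt g a b ->
  RInt (fun t => f t - g t) a b = RInt f a b - RInt g a b.
Proof. intros; apply (RInt_minus f g); auto. Qed.

Lemma RInt_scalR (f : R -> R) a b k : ex_RInt f a b ->
  RInt (fun t => k * f t) a b = k * RInt f a b.
Proof. intros; apply (RInt_scal f); auto. Qed.

Lemma RInt_constR a b c : RInt (fun _ => c) a b = (b - a) * c.
Proof. apply (RInt_const (V := R_CompleteNormedModule)). Qed.

Lemma RInt_of_derive (F f : R -> R) a b :
  (forall x : R, is_derive F x (f x)) -> (forall x : R, continuous f x) -> RInt f a b = F b - F a.
Proof. intros H1 H2. apply is_RInt_unique, (is_RInt_derive F f); auto. Qed.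

(* [ring] fails on equalities typed at a Coquelicot carrier such as [R_AbsRing], which is only
   convertible to [R]; such goals arise from the lemmas above. *)
Ltac Rring := match goal with |- ?a = ?b => change (@eq R a b); ring end.

(** * Real-variable calculus *)

Lemma Rabs_between_le a b t : Rmin a b <= t <= Rmax a b -> Rabs (t - a) <= Rabs (b - a).
Proof.
  intros Ht. unfold Rmin, Rmax in Ht.
  destruct (Rle_dec a b); unfold Rabs; repeat destruct Rcase_abs; lra.
Qed.

Lemma MVT_point (F dF : R -> R) (a b : R) : (forall t : R, is_derive F t (dF t)) ->
  exists c, Rabs (c - a) <= Rabs (b - a) /\ F b - F a = dF c * (b - a).
Proof.
  intros H. destruct (MVT_gen F a b dF) as [c [Hc Heq]].
  - intros; apply H.
  - intros t _. eapply is_derive_continuity_pt, H.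
  - exists c. split; [apply Rabs_between_le, Hc | exact Heq].
Qed.

Lemma is_derive_0_const (F : R -> R) : (forall x : R, is_derive F x 0) -> forall x y : R, F x = F y.
Proof. intros H x y. destruct (MVT_point F (fun _ => 0) y x H) as [c [_ E]]. lra. Qed.

Lemma exp_le_exp x y : x <= y -> exp x <= exp y.
Proof. intros [H|<-]; [left; apply exp_increasing, H | right; reflexivity]. Qed.

Lemma exp_2_le_9 : exp 2 <= 9.
Proof.
  replace 2 with (1 + 1) by ring. rewrite exp_plus.
  assert (H := exp_le_3). assert (H0 := exp_pos 1). nra.
Qed.

Lemma le_0_of_forall_mul_le x y : (forall s, 0 < s -> x * s <= y) -> x <= 0.
Proof.
  intros H. apply Rnot_lt_le. intros Hx.
  assert (Hy := Rabs_pos y).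
  assert (Hs : 0 < (Rabs y + 1) / x) by (apply Rdiv_lt_0_compat; lra).
  specialize (H _ Hs). replace (x * ((Rabs y + 1) / x)) with (Rabs y + 1) in H by (field; lra).
  assert (H1 := Rle_abs y). lra.
Qed.

Lemma RInt_le_abs_weight (w g : R -> R) a b : a <= b ->
  (forall t : R, continuous w t) -> (forall t : R, continuous g t) ->
  (forall t, Rabs (w t) <= 1) -> (forall t, 0 <= g t) ->
  Rabs (RInt (fun t => w t * g t) a b) <= RInt g a b.
Proof.
  intros Hab Cw Cg Hw Hg.
  assert (Ewg : ex_RInt (fun t => w t * g t) a b) by ex_RInt_auto.
  assert (Eg : ex_RInt g a b) by ex_RInt_auto.
  assert (Bw : forall t, - g t <= w t * g t <= g t).
  { intro t. specialize (Hw t). specialize (Hg t). apply Rabs_le_between in Hw. split; nra. }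
  apply Rabs_le. split.
  - rewrite <- (RInt_opp (V := R_CompleteNormedModule)) by exact Eg.
    apply RInt_le; auto; [apply (ex_RInt_opp (V := R_CompleteNormedModule)); exact Eg|].
    intros t _. apply Bw.
  - apply RInt_le; auto. intros t _. apply Bw.
Qed.

Lemma is_derive_RInt_paramR (F dF : R -> R -> R) a b x :
  (forall s t, is_derive (fun s => F s t) s (dF s t)) ->
  (forall s t, continuous (fun z : R * R => dF (fst z) (snd z)) (s, t)) ->
  (forall s t, continuous (fun z : R * R => F (fst z) (snd z)) (s, t)) ->
  is_derive (fun s => RInt (F s) a b) x (RInt (dF x) a b).
Proof.
  intros HD HdC HC.
  rewrite (RInt_ext _ (fun t => Derive (fun s => F s t) x))
    by (intros t _; symmetry; apply is_derive_unique, HD).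
  apply (is_derive_RInt_param F).
  - exists (mkposreal 1 Rlt_0_1). intros y _ t _. eexists; apply HD.
  - intros t _. apply continuity_2d_pt_filterlim.
    replace (Derive (fun z => F z t) x) with (dF x t) by (symmetry; apply is_derive_unique, HD).
    eapply filterlim_ext; [| apply (HdC x t)].
    intros z. symmetry; apply is_derive_unique, HD.
  - exists (mkposreal 1 Rlt_0_1). intros y _. apply ex_RInt_cont. intros t.
    apply (continuous_comp_2 (fun _ => y) (fun t => t) F);
      [apply continuous_const | apply continuous_id | apply HC].
Qed.

Lemma gronwall_right (f df : R -> R) K x0 x1 : x0 <= x1 ->
  (forall t, x0 <= t <= x1 -> is_derive f t (df t) /\ df t <= K * f t) ->
  f x1 <= exp (K * (x1 - x0)) * f x0.
Proof.
  intros Hx H.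
  set (h := fun t => f t * exp (- K * t)).
  assert (Dh : forall t, x0 <= t <= x1 -> is_derive h t ((df t - K * f t) * exp (- K * t))).
  { intros t Ht. eapply is_derive_eq.
    - apply is_derive_multR; [apply (H t Ht) | auto_derive; auto].
    - cbv beta; ring. }
  destruct (MVT_gen h x0 x1 (fun t => (df t - K * f t) * exp (- K * t))) as [c [Hc E]];
    rewrite Rmin_left, Rmax_right in * by lra.
  - intros t Ht. apply Dh. lra.
  - intros t Ht. eapply is_derive_continuity_pt, Dh, Ht.
  - assert (Hdc : df c - K * f c <= 0) by (destruct (H c Hc); lra).
    assert (Hh : h x1 <= h x0).
    { assert (0 < exp (- K * c)) by apply exp_pos.
      assert ((df c - K * f c) * exp (- K * c) * (x1 - x0) <= 0); [|lra].
      apply Rmult_le_0_r; [|lra]. apply Rmult_le_0_r; lra. }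
    unfold h in Hh.
    assert (Split : exp (- K * x0) = exp (- K * x1) * exp (K * (x1 - x0)))
      by (rewrite <- exp_plus; f_equal; ring).
    rewrite Split in Hh.
    apply (Rmult_le_reg_r (exp (- K * x1))); [apply exp_pos | lra].
Qed.

Lemma gronwall_abs_le (f df : R -> R) K x0 x1 :
  (forall t, Rmin x0 x1 <= t <= Rmax x0 x1 -> is_derive f t (df t) /\ Rabs (df t) <= K * f t) ->
  f x1 <= exp (K * Rabs (x1 - x0)) * f x0.
Proof.
  intros H. destruct (Rle_dec x0 x1) as [Hx|Hx].
  - rewrite Rmin_left, Rmax_right in H by lra. rewrite Rabs_right by lra.
    apply (gronwall_right f df); auto.
    intros t Ht. destruct (H t Ht) as [Hd Hb]. split; auto.
    apply Rabs_le_between in Hb. lra.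
  - rewrite Rmin_right, Rmax_left in H by lra. rewrite Rabs_left by lra.
    assert (G := gronwall_right (fun t => f (- t)) (fun t => - df (- t)) K (- x0) (- x1)).
    cbv beta in G. rewrite !Ropp_involutive in G.
    replace (K * - (x1 - x0)) with (K * (- x1 - - x0)) by ring.
    apply G; [lra|]. intros t Ht.
    assert (Ht' : x1 <= - t <= x0) by lra.
    destruct (H _ Ht') as [Hd Hb]. split.
    + eapply is_derive_eq; [apply (is_derive_comp f Ropp); [exact Hd | auto_derive; auto]|].
      change (- (1) * df (- t) = - df (- t)); ring.
    + apply Rabs_le_between in Hb. lra.
Qed.

Lemma gronwall_abs (f df : R -> R) K x0 x1 :
  (forall t, Rmin x0 x1 <= t <= Rmax x0 x1 -> is_derive f t (df t) /\ Rabs (df t) <= K * f t) ->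
  f x1 <= exp (K * Rabs (x1 - x0)) * f x0 /\ f x0 <= exp (K * Rabs (x1 - x0)) * f x1.
Proof.
  intros H. split; [apply (gronwall_abs_le f df); exact H|].
  rewrite Rabs_minus_sym. apply (gronwall_abs_le f df).
  rewrite Rmin_comm, Rmax_comm. exact H.
Qed.

Lemma continuous_R2_abs (g : R * R -> R) x y (eps : posreal) :
  continuous g (x, y) -> exists delta : posreal, forall a b,
    Rabs (a - x) < delta -> Rabs (b - y) < delta -> Rabs (g (a, b) - g (x, y)) < eps.
Proof.
  intros H. destruct (proj1 (filterlim_locally _ _) H eps) as [delta Hd].
  exists delta. intros a b Ha Hb. apply (Hd (a, b)). split; assumption.
Qed.

Lemma is_derive_partial_x (f : R * R -> R) (x y : R) : has_partials f ->
  is_derive (fun s => f (s, y)) x (dx f (x, y)).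
Proof. intros Hp. apply Derive_correct, (Hp (x, y)). Qed.

Lemma is_derive_partial_y (f : R * R -> R) (x y : R) : has_partials f ->
  is_derive (fun s => f (x, s)) y (dy f (x, y)).
Proof. intros Hp. apply Derive_correct, (Hp (x, y)). Qed.

Lemma differentiable_of_partials (f : R * R -> R) (x y : R) :
  has_partials f -> continuous (dx f) (x, y) -> continuous (dy f) (x, y) ->
  differentiable_pt_lim (fun a b => f (a, b)) x y (dx f (x, y)) (dy f (x, y)).
Proof.
  intros Hp Hcx Hcy eps.
  assert (He2 : 0 < eps / 2) by (destruct eps; simpl; lra).
  destruct (continuous_R2_abs _ _ _ (mkposreal _ He2) Hcx) as [d1 H1].
  destruct (continuous_R2_abs _ _ _ (mkposreal _ He2) Hcy) as [d2 H2].
  assert (Hd : 0 < Rmin d1 d2) by (apply Rmin_pos; apply cond_pos).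
  exists (mkposreal _ Hd). simpl. intros a b Ha Hb.
  destruct (MVT_point (fun s => f (s, b)) (fun s => dx f (s, b)) x a) as [c [Hc Ec]].
  { intro t; apply is_derive_partial_x; auto. }
  destruct (MVT_point (fun s => f (x, s)) (fun s => dy f (x, s)) y b) as [e [He Ee]].
  { intro t; apply is_derive_partial_y; auto. }
  assert (Hmin1 := Rmin_l d1 d2). assert (Hmin2 := Rmin_r d1 d2).
  assert (K1 : Rabs (dx f (c, b) - dx f (x, y)) < eps / 2) by (apply H1; simpl in *; lra).
  assert (K2 : Rabs (dy f (x, e) - dy f (x, y)) < eps / 2).
  { apply H2; [rewrite Rminus_diag, Rabs_R0; apply cond_pos | simpl in *; lra]. }
  cbv beta in Ec, Ee |- *.
  assert (Hsplit : f (a, b) - f (x, y) - (dx f (x, y) * (a - x) + dy f (x, y) * (b - y))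
    = (dx f (c, b) - dx f (x, y)) * (a - x) + (dy f (x, e) - dy f (x, y)) * (b - y)).
  { replace (f (a, b) - f (x, y)) with ((f (a, b) - f (x, b)) + (f (x, b) - f (x, y))) by ring.
    rewrite Ec, Ee. ring. }
  rewrite Hsplit.
  eapply Rle_trans; [apply Rabs_triang|]. rewrite !Rabs_mult.
  assert (M1 := Rmax_l (Rabs (a - x)) (Rabs (b - y))).
  assert (M2 := Rmax_r (Rabs (a - x)) (Rabs (b - y))).
  assert (P1 := Rabs_pos (a - x)). assert (P2 := Rabs_pos (b - y)).
  assert (Q1 := Rabs_pos (dx f (c, b) - dx f (x, y))).
  assert (Q2 := Rabs_pos (dy f (x, e) - dy f (x, y))).
  nra.
Qed.

Lemma is_derive_comp_partials (f : R * R -> R) (A B : R -> R) (t dA dB : R) : has_partials f ->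
  continuous (dx f) (A t, B t) -> continuous (dy f) (A t, B t) ->
  is_derive A t dA -> is_derive B t dB ->
  is_derive (fun s => f (A s, B s)) t (dx f (A t, B t) * dA + dy f (A t, B t) * dB).
Proof.
  intros Hp Hx Hy HA HB. apply is_derive_Reals.
  apply (derivable_pt_lim_comp_2d (fun a b => f (a, b)) A B);
    [apply differentiable_of_partials | apply is_derive_Reals ..]; auto.
Qed.

Lemma const_of_partials_eq0 (f : R * R -> R) : has_partials f ->
  (forall c, dx f c = 0 /\ dy f c = 0) -> forall p q, f p = f q.
Proof.
  intros Hp Hz [p1 p2] [q1 q2].
  transitivity (f (q1, p2)).
  - apply (is_derive_0_const (fun t => f (t, p2))). intro t.
    eapply is_derive_eq; [apply is_derive_partial_x, Hp | apply Hz].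
  - apply (is_derive_0_const (fun t => f (q1, t))). intro t.
    eapply is_derive_eq; [apply is_derive_partial_y, Hp | apply Hz].
Qed.

Lemma bounded_on_rectangle (f : R * R -> R) a1 b1 a2 b2 : (forall q, continuous f q) ->
  exists B, forall x y, a1 <= x <= b1 -> a2 <= y <= b2 -> Rabs (f (x, y)) <= B.
Proof.
  intros Cf.
  assert (Hdelta : forall t : Compactness.Tn 2 R, exists d : posreal, forall x y,
    Rabs (x - fst t) < d -> Rabs (y - fst (snd t)) < d ->
    Rabs (f (x, y) - f (fst t, fst (snd t))) < 1).
  { intros [t1 [t2 []]]. apply (continuous_R2_abs f t1 t2 (mkposreal 1 Rlt_0_1)), Cf. }
  destruct (choice _ Hdelta) as [delta Hd].
  apply NNPP; intros Hno.
  apply (compactness_list 2 (a1, (a2, tt)) (b1, (b2, tt)) delta). intros [l Hl].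
  apply Hno.
  exists (List.fold_right (fun t m => Rmax (Rabs (f (fst t, fst (snd t))) + 1) m) 0 l).
  intros x y Hx Hy.
  destruct (Hl (x, (y, tt))) as [t [Ht [_ Hclose]]]; [simpl; tauto|].
  apply Rle_trans with (Rabs (f (fst t, fst (snd t))) + 1).
  - destruct t as [t1 [t2 []]]. destruct Hclose as [H1 [H2 _]].
    specialize (Hd (t1, (t2, tt)) x y H1 H2). simpl in Hd |- *.
    assert (Htr := Rabs_triang_inv (f (x, y)) (f (t1, t2))). lra.
  - clear -Ht. induction l as [|s l IH]; [destruct Ht|]. simpl.
    destruct Ht as [<-|Ht]; [apply Rmax_l|].
    eapply Rle_trans; [apply IH, Ht | apply Rmax_r].
Qed.

Definition edist (w z : R * R) : R := sqrt ((fst w - fst z) ^ 2 + (snd w - snd z) ^ 2).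

Lemma in_disc_edist z r w : in_disc z r w <-> edist w z < r.
Proof. reflexivity. Qed.

Lemma M_ge (h : R * R -> R) z r w : in_disc z r w -> Rbar_le (h w) (M h z r).
Proof. intros Hw. apply (proj1 (Lub_Rbar_correct _)). exists w; auto. Qed.

Lemma M_le (h : R * R -> R) z r (b : R) :
  (forall w, in_disc z r w -> h w <= b) -> Rbar_le (M h z r) b.
Proof. intros H. apply (proj2 (Lub_Rbar_correct _)). intros x [w [Hw ->]]. apply H, Hw. Qed.

Lemma Rbar_mult_pos_p_infty (c : R) : 0 < c -> Rbar_mult c p_infty = p_infty.
Proof.
  intros Hc. unfold Rbar_mult, Rbar_mult'.
  destruct (Rle_dec 0 c) as [H|H]; [|lra].
  destruct (Rle_lt_or_eq_dec 0 c H); [reflexivity | lra].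
Qed.

Lemma edist_ge0 w z : 0 <= edist w z.
Proof. apply sqrt_pos. Qed.

Lemma edist_refl z : edist z z = 0.
Proof. unfold edist. rewrite !Rminus_diag, pow_i, Rplus_0_r by lia. apply sqrt_0. Qed.

Lemma edist_sym w z : edist w z = edist z w.
Proof. unfold edist. f_equal. ring. Qed.

Lemma edist_triangle a b c : edist a c <= edist a b + edist b c.
Proof.
  assert (H := triangle (fst a) (snd a) (fst c) (snd c) (fst b) (snd b)).
  unfold dist_euc, Rsqr in H. unfold edist. simpl. rewrite !Rmult_1_r. exact H.
Qed.

Lemma Rabs_fst_le_edist w z : Rabs (fst w - fst z) <= edist w z.
Proof.
  unfold edist. rewrite <- (sqrt_pow2 (Rabs (fst w - fst z))) by apply Rabs_pos.
  apply sqrt_le_1_alt. rewrite pow2_abs. assert (H := pow2_ge_0 (snd w - snd z)). lra.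
Qed.

Lemma Rabs_snd_le_edist w z : Rabs (snd w - snd z) <= edist w z.
Proof.
  unfold edist. rewrite <- (sqrt_pow2 (Rabs (snd w - snd z))) by apply Rabs_pos.
  apply sqrt_le_1_alt. rewrite pow2_abs. assert (H := pow2_ge_0 (fst w - fst z)). lra.
Qed.

Lemma edist_le_L1 w z : edist w z <= Rabs (fst w - fst z) + Rabs (snd w - snd z).
Proof.
  assert (H1 := Rabs_pos (fst w - fst z)); assert (H2 := Rabs_pos (snd w - snd z)).
  unfold edist. rewrite <- (sqrt_pow2 (Rabs (fst w - fst z) + Rabs (snd w - snd z))) by lra.
  apply sqrt_le_1_alt. rewrite <- (pow2_abs (fst w - fst z)), <- (pow2_abs (snd w - snd z)).
  nra.
Qed.

Lemma L1_le_edist w z : Rabs (fst w - fst z) + Rabs (snd w - snd z) <= 3 / 2 * edist w z.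
Proof.
  set (a := Rabs (fst w - fst z)). set (b := Rabs (snd w - snd z)).
  assert (Ha := Rabs_pos (fst w - fst z)); assert (Hb := Rabs_pos (snd w - snd z)).
  assert (E : edist w z ^ 2 = a ^ 2 + b ^ 2).
  { unfold edist, a, b. rewrite pow2_sqrt, !pow2_abs; [ring|].
    assert (H1 := pow2_ge_0 (fst w - fst z)); assert (H2 := pow2_ge_0 (snd w - snd z)). lra. }
  assert (D := edist_ge0 w z).
  apply Rsqr_incr_0_var; unfold Rsqr; [|lra].
  assert (H := pow2_ge_0 (a - b)). fold a b in Ha, Hb. nra.
Qed.

Lemma bounded_on_disc (f : R * R -> R) z r : (forall q, continuous f q) ->
  exists B, forall w, edist w z <= r -> Rabs (f w) <= B.
Proof.
  intros Cf.
  destruct (bounded_on_rectangle f (fst z - r) (fst z + r) (snd z - r) (snd z + r) Cf)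
    as [B HB].
  exists B. intros [x y] Hw. apply HB.
  - assert (H := Rabs_fst_le_edist (x, y) z). simpl in H.
    apply Rabs_le_between' in H. lra.
  - assert (H := Rabs_snd_le_edist (x, y) z). simpl in H.
    apply Rabs_le_between' in H. lra.
Qed.

Definition seg_point (p w : R * R) (l : R) : R * R :=
  (fst p + l * (fst w - fst p), snd p + l * (snd w - snd p)).

Lemma edist_seg_point_l p w l : edist (seg_point p w l) p = Rabs l * edist w p.
Proof.
  unfold edist, seg_point; cbn [fst snd].
  replace ((fst p + l * (fst w - fst p) - fst p) ^ 2 + (snd p + l * (snd w - snd p) - snd p) ^ 2)
    with (l ^ 2 * ((fst w - fst p) ^ 2 + (snd w - snd p) ^ 2)) by ring.
  rewrite sqrt_mult_alt, <- pow2_abs, sqrt_pow2 by (apply pow2_ge_0 || apply Rabs_pos).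
  reflexivity.
Qed.

Lemma edist_seg_point_r p w l : edist (seg_point p w l) w = Rabs (1 - l) * edist w p.
Proof.
  unfold edist, seg_point; cbn [fst snd].
  replace ((fst p + l * (fst w - fst p) - fst w) ^ 2 + (snd p + l * (snd w - snd p) - snd w) ^ 2)
    with ((1 - l) ^ 2 * ((fst w - fst p) ^ 2 + (snd w - snd p) ^ 2)) by ring.
  rewrite sqrt_mult_alt, <- pow2_abs, sqrt_pow2 by (apply pow2_ge_0 || apply Rabs_pos).
  reflexivity.
Qed.

Lemma IVT_seg_point (f : R * R -> R) p w : (forall q, continuous f q) ->
  0 < f p -> f w <= 0 -> exists l, 0 <= l <= 1 /\ f (seg_point p w l) = 0.
Proof.
  intros Cf Hp Hw.
  assert (E0 : seg_point p w 0 = p)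
    by (unfold seg_point; rewrite !Rmult_0_l, !Rplus_0_r; destruct p; reflexivity).
  assert (E1 : seg_point p w 1 = w) by (unfold seg_point; destruct p, w; simpl; f_equal; ring).
  destruct (Req_dec (f w) 0) as [Z|Z].
  - exists 1. split; [lra|]. rewrite E1; exact Z.
  - destruct (IVT (fun l => - f (seg_point p w l)) 0 1) as [l [Hl El]]; [| lra | rewrite E0; lra
                                                                  | rewrite E1; lra |].
    + apply continuity_opp. intro l. apply continuity_pt_filterlim.
      change (continuous (fun l => f (seg_point p w l)) l). unfold seg_point. auto_cont.
    + exists l. split; [exact Hl | lra].
Qed.

Lemma no_zero_same_sign (f : R * R -> R) p rho : (forall q, continuous f q) ->
  (forall w, edist w p < rho -> f w <> 0) -> forall w, edist w p < rho -> 0 < f p * f w.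
Proof.
  intros Cf Hno w Hw. apply Rnot_le_lt. intros Hneg.
  assert (Hp : f p <> 0) by (apply Hno; rewrite edist_refl; assert (H := edist_ge0 w p); lra).
  destruct (IVT_seg_point (fun q => f p * f q) p w) as [l [Hl Hz]]; auto.
  - intro q. auto_cont.
  - apply Rsqr_pos_lt, Hp.
  - apply (Hno (seg_point p w l)).
    + rewrite edist_seg_point_l, Rabs_right by lra.
      assert (H := edist_ge0 w p). nra.
    + apply Rmult_integral in Hz. destruct Hz; [contradiction | assumption].
Qed.

Definition circle (p : R * R) (s t : R) : R * R := (fst p + s * cos t, snd p + s * sin t).

Lemma circle_0 p t : circle p 0 t = p.
Proof. unfold circle. rewrite !Rmult_0_l, !Rplus_0_r. destruct p; reflexivity. Qed.

Lemma circle_2PI p s : circle p s (2 * PI) = circle p s 0.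
Proof. unfold circle. rewrite cos_2PI, sin_2PI, cos_0, sin_0. reflexivity. Qed.

Lemma edist_circle p s t : edist (circle p s t) p = Rabs s.
Proof.
  unfold edist, circle. cbn [fst snd]. rewrite <- sqrt_Rsqr_abs. f_equal.
  assert (H := sin2_cos2 t). unfold Rsqr in *. nra.
Qed.

Lemma RInt_cos_sin_period a b : RInt (fun t => a * cos t + b * sin t) 0 (2 * PI) = 0 :> R.
Proof.
  rewrite (RInt_of_derive (fun t => a * sin t - b * cos t)).
  - rewrite sin_2PI, cos_2PI, sin_0, cos_0. ring.
  - intro t. auto_derive; auto. ring.
  - intro t. auto_cont; apply continuous_cos || apply continuous_sin.
Qed.

Section CircleDerivatives.
Variable g : R * R -> R.
Hypothesis partials_g : has_partials g.
Hypothesis cont_dx_g : forall q, continuous (dx g) q.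
Hypothesis cont_dy_g : forall q, continuous (dy g) q.

Lemma is_derive_circle_radius p (s t : R) :
  is_derive (fun s => g (circle p s t)) s
    (dx g (circle p s t) * cos t + dy g (circle p s t) * sin t).
Proof.
  apply (is_derive_comp_partials g (fun s => fst p + s * cos t) (fun s => snd p + s * sin t));
    auto; auto_derive; auto; Rring.
Qed.

Lemma is_derive_circle_angle p (s t : R) :
  is_derive (fun t => g (circle p s t)) t
    (s * (dy g (circle p s t) * cos t - dx g (circle p s t) * sin t)).
Proof.
  eapply is_derive_eq.
  - apply (is_derive_comp_partials g (fun t => fst p + s * cos t) (fun t => snd p + s * sin t));
      auto; auto_derive; auto.
  - unfold circle; simpl; Rring.
Qed.

Lemma is_derive_circle_center p (v1 v2 s t a : R) :
  is_derive (fun a => g (circle (fst p + a * v1, snd p + a * v2) s t)) a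
    (v1 * dx g (circle (fst p + a * v1, snd p + a * v2) s t)
     + v2 * dy g (circle (fst p + a * v1, snd p + a * v2) s t)).
Proof.
  eapply is_derive_eq.
  - apply (is_derive_comp_partials g (fun a => fst p + a * v1 + s * cos t)
                                      (fun a => snd p + a * v2 + s * sin t));
      auto; auto_derive; auto.
  - unfold circle; simpl; Rring.
Qed.

End CircleDerivatives.

Lemma exists_half_maximizer {T : Type} (S : T -> Prop) (Phi : T -> R) :
  (exists B, forall w, S w -> Phi w <= B) -> (exists q, S q /\ 0 < Phi q) ->
  exists p, S p /\ 0 < Phi p /\ forall w, S w -> Phi w < 2 * Phi p.
Proof.
  intros Hbd [q [Sq Hq]].
  destruct (completeness (fun y => exists w, S w /\ y = Phi w)) as [m [Hub Hlub]].
  - destruct Hbd as [B HB]. exists B. intros y [w [Sw ->]]. apply HB, Sw.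
  - exists (Phi q), q. split; auto.
  - assert (Hqm : Phi q <= m) by (apply Hub; exists q; split; auto).
    assert (Hp : exists p, S p /\ m / 2 < Phi p).
    { apply NNPP. intros Hno. assert (m <= m / 2); [|lra].
      apply Hlub. intros y [w [Sw ->]]. apply Rnot_lt_le. intros Hw. apply Hno. exists w. auto. }
    destruct Hp as [p [Sp Hp]]. exists p. split; [exact Sp|]. split; [lra|].
    intros w Sw. assert (Phi w <= m) by (apply Hub; exists w; split; auto). lra.
Qed.

(* The weight vanishes on the circle of radius [R0] around [z0]; this is what makes an
   approximate maximiser a point where [f] is large compared to [f] on a disc of comparable
   size around it. *)
Definition weighted (f : R * R -> R) (z0 : R * R) (R0 : R) (n : nat) (w : R * R) : R :=
  Rabs (f w) * (R0 - edist w z0) ^ n.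

Lemma weighted_doubling f z0 R0 n p w :
  0 < R0 - edist p z0 -> (R0 - edist p z0) / 2 <= R0 - edist w z0 ->
  weighted f z0 R0 n w < 2 * weighted f z0 R0 n p -> Rabs (f w) <= 2 ^ S n * Rabs (f p).
Proof.
  unfold weighted. set (d := R0 - edist p z0). intros Hd Hw Hlt.
  assert (Hd2 : 0 < (d / 2) ^ n) by (apply pow_lt; lra).
  assert (Hmono : (d / 2) ^ n <= (R0 - edist w z0) ^ n) by (apply pow_incr; lra).
  assert (Hsplit : d ^ n = 2 ^ n * (d / 2) ^ n)
    by (rewrite <- Rpow_mult_distr; f_equal; field).
  assert (Habs := Rabs_pos (f w)).
  apply Rlt_le, (Rmult_lt_reg_r ((d / 2) ^ n)); [exact Hd2|].
  rewrite Hsplit in Hlt. simpl. nra.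
Qed.

Definition doubling_exponent : nat := 1200.

Lemma doubling_exponent_large : 19 <= (65 / 64) ^ doubling_exponent.
Proof.
  replace (65 / 64) with (1 + 1 / 64) by field.
  eapply Rle_trans; [|apply Rle_pow_lin; lra].
  unfold doubling_exponent. rewrite INR_IZR_INZ. simpl. lra.
Qed.

Definition doubling_disc (u : R * R -> R) (K : R) (z : R * R) (r : R) (p : R * R) : Prop :=
  0 < r /\ u z = 0 /\ edist p z < r / 5 /\
  forall w, edist w z < r -> Rabs (u w) <= K * Rabs (u p).

(** * Harmonic functions *)

Section Harmonic.
Variable u : R * R -> R.
Hypothesis harm_u : harmonic u.

Let C2_u : C2 u := proj1 harm_u.
Let partials_u : has_partials u := proj1 C2_u.
Let partials_dx : has_partials (dx u) := proj1 (proj2 C2_u).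
Let partials_dy : has_partials (dy u) := proj1 (proj2 (proj2 C2_u)).
Let cont_all q := proj2 (proj2 (proj2 C2_u)) q.
Let cont_u q : continuous u q := proj1 (cont_all q).
Let cont_dx q : continuous (dx u) q := proj1 (proj2 (cont_all q)).
Let cont_dy q : continuous (dy u) q := proj1 (proj2 (proj2 (cont_all q))).
Let cont_dxx q : continuous (dx (dx u)) q := proj1 (proj2 (proj2 (proj2 (cont_all q)))).
Let cont_dxy q : continuous (dy (dx u)) q := proj1 (proj2 (proj2 (proj2 (proj2 (cont_all q))))).
Let cont_dyx q : continuous (dx (dy u)) q :=
  proj1 (proj2 (proj2 (proj2 (proj2 (proj2 (cont_all q)))))).
Let cont_dyy q : continuous (dy (dy u)) q :=
  proj2 (proj2 (proj2 (proj2 (proj2 (proj2 (cont_all q)))))).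
Let laplace_u q : dx (dx u) q + dy (dy u) q = 0 := proj2 harm_u q.

(* [s] times the integral below is the flux of the gradient of [u] through the circle of
   radius [s]; its derivative is the integral of the Laplacian in polar coordinates, that is,
   of a derivative in the angle [t]. *)
Lemma is_derive_circle_flux p s :
  is_derive (fun s => s * RInt (fun t => cos t * dx u (circle p s t) + sin t * dy u (circle p s t))
                                0 (2 * PI)) s 0.
Proof.
  set (psi := fun s t => cos t * dx u (circle p s t) + sin t * dy u (circle p s t)).
  change (is_derive (fun s => s * RInt (psi s) 0 (2 * PI)) s 0).
  set (dpsi := fun s t =>
    cos t * (dx (dx u) (circle p s t) * cos t + dy (dx u) (circle p s t) * sin t)
    + sin t * (dx (dy u) (circle p s t) * cos t + dy (dy u) (circle p s t) * sin t)).
  set (G := fun t => sin t * dx u (circle p s t) - cos t * dy u (circle p s t)).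
  set (dG := fun t =>
    cos t * dx u (circle p s t)
    + sin t * (s * (dy (dx u) (circle p s t) * cos t - dx (dx u) (circle p s t) * sin t))
    - (- sin t * dy u (circle p s t)
       + cos t * (s * (dy (dy u) (circle p s t) * cos t - dx (dy u) (circle p s t) * sin t)))).
  assert (DG : forall t, is_derive G t (dG t)).
  { intro t. apply is_derive_minusR; apply is_derive_multR;
      apply is_derive_sin || apply is_derive_cos || apply is_derive_circle_angle; auto. }
  assert (IG : RInt dG 0 (2 * PI) = 0 :> R).
  { rewrite (RInt_of_derive G dG _ _ DG) by (intro; unfold dG, circle; auto_cont).
    unfold G. rewrite circle_2PI, sin_2PI, cos_2PI, sin_0, cos_0. Rring. }
  eapply is_derive_eq.
  - apply is_derive_multR; [apply is_derive_idR|].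
    apply (is_derive_RInt_paramR psi dpsi).
    + intros s1 t. unfold psi, dpsi.
      apply is_derive_plusR; apply is_derive_scalR, is_derive_circle_radius; auto.
    + intros s1 t. unfold dpsi, circle. auto_cont.
    + intros s1 t. unfold psi, circle. auto_cont.
  - transitivity (RInt (fun t => psi s t + s * dpsi s t) 0 (2 * PI)).
    { rewrite (RInt_plusR (psi s) (fun t => s * dpsi s t)), (RInt_scalR (dpsi s)); try Rring;
        ex_RInt_auto; unfold psi, dpsi, circle; auto_cont. }
    etransitivity; [|exact IG]. apply RInt_ext. intros t _. unfold psi, dpsi, dG.
    replace (dy (dy u) (circle p s t)) with (- dx (dx u) (circle p s t))
      by (assert (L := laplace_u (circle p s t)); lra).
    Rring.
Qed.

Lemma RInt_circle_radial_derivative p s :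
  RInt (fun t => cos t * dx u (circle p s t) + sin t * dy u (circle p s t)) 0 (2 * PI) = 0 :> R.
Proof.
  destruct (Req_dec s 0) as [->|Hs].
  - transitivity (RInt (fun t => dx u p * cos t + dy u p * sin t) 0 (2 * PI));
      [|apply RInt_cos_sin_period].
    apply RInt_ext. intros t _. rewrite circle_0. Rring.
  - assert (E := is_derive_0_const _ (is_derive_circle_flux p) s 0). cbv beta in E.
    rewrite Rmult_0_l in E. apply Rmult_integral in E.
    destruct E as [E|E]; [contradiction | exact E].
Qed.

Lemma mean_value_circle p s : RInt (fun t => u (circle p s t)) 0 (2 * PI) = 2 * PI * u p :> R.
Proof.
  assert (D : forall s, is_derive (fun s => RInt (fun t => u (circle p s t)) 0 (2 * PI)) s 0).
  { intro s0. eapply is_derive_eq; [|apply (RInt_circle_radial_derivative p s0)].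
    apply (is_derive_RInt_paramR (fun s t => u (circle p s t))
             (fun s t => cos t * dx u (circle p s t) + sin t * dy u (circle p s t))).
    - intros s1 t. eapply is_derive_eq; [apply is_derive_circle_radius; auto | Rring].
    - intros s1 t. unfold circle. auto_cont.
    - intros s1 t. unfold circle. auto_cont. }
  rewrite (is_derive_0_const _ D s 0).
  rewrite (RInt_ext _ (fun _ => u p)) by (intros; rewrite circle_0; reflexivity).
  rewrite RInt_constR. Rring.
Qed.

(* Differentiate the mean value property in the centre, along the direction (v1, v2). *)
Lemma mean_value_circle_directional p v1 v2 s :
  RInt (fun t => v1 * dx u (circle p s t) + v2 * dy u (circle p s t)) 0 (2 * PI)
  = 2 * PI * (v1 * dx u p + v2 * dy u p) :> R.
Proof.
  set (q := fun a => (fst p + a * v1, snd p + a * v2)).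
  assert (q0 : q 0 = p) by (unfold q; rewrite !Rmult_0_l, !Rplus_0_r; destruct p; reflexivity).
  assert (H1 : is_derive (fun a => RInt (fun t => u (circle (q a) s t)) 0 (2 * PI)) 0
      (RInt (fun t => v1 * dx u (circle (q 0) s t) + v2 * dy u (circle (q 0) s t)) 0 (2 * PI))).
  { apply (is_derive_RInt_paramR (fun a t => u (circle (q a) s t))
      (fun a t => v1 * dx u (circle (q a) s t) + v2 * dy u (circle (q a) s t))).
    - intros a0 t. apply is_derive_circle_center; auto.
    - intros a0 t. unfold circle, q. cbn [fst snd]. auto_cont.
    - intros a0 t. unfold circle, q. cbn [fst snd]. auto_cont. }
  assert (H2 : is_derive (fun a => 2 * PI * u (q a)) 0
                         (2 * PI * (v1 * dx u (q 0) + v2 * dy u (q 0)))).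
  { apply is_derive_scalR. eapply is_derive_eq.
    - apply (is_derive_comp_partials u (fun a => fst p + a * v1) (fun a => snd p + a * v2));
        auto; auto_derive; auto.
    - unfold q. Rring. }
  rewrite q0 in H1, H2.
  apply (is_derive_ext _ _ _ _ (fun a => mean_value_circle (q a) s)) in H1.
  rewrite <- (is_derive_unique _ _ _ H1). apply is_derive_unique, H2.
Qed.

Lemma RInt_circle_by_parts p v1 v2 s :
  RInt (fun t => (v1 * cos t + v2 * sin t) * u (circle p s t)) 0 (2 * PI)
  = - RInt (fun t => (v1 * sin t - v2 * cos t)
                     * (s * (dy u (circle p s t) * cos t - dx u (circle p s t) * sin t))) 0 (2 * PI)
  :> R.
Proof.
  set (ut := fun t => s * (dy u (circle p s t) * cos t - dx u (circle p s t) * sin t)).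
  assert (Hd : forall t, is_derive (fun t => (v1 * sin t - v2 * cos t) * u (circle p s t)) t
                 ((v1 * cos t + v2 * sin t) * u (circle p s t) + (v1 * sin t - v2 * cos t) * ut t)).
  { intro t. apply (is_derive_multR (fun t => v1 * sin t - v2 * cos t) (fun t => u (circle p s t)));
      [auto_derive; auto; Rring | apply is_derive_circle_angle; auto]. }
  assert (I : RInt (fun t => (v1 * cos t + v2 * sin t) * u (circle p s t)
                             + (v1 * sin t - v2 * cos t) * ut t) 0 (2 * PI) = 0 :> R).
  { rewrite (RInt_of_derive _ _ _ _ Hd) by (intro; unfold ut, circle; auto_cont).
    rewrite circle_2PI, sin_2PI, cos_2PI, sin_0, cos_0. Rring. }
  rewrite RInt_plusR in I; [| ex_RInt_auto; unfold ut, circle; auto_cont ..].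
  unfold ut in I. lra.
Qed.

(* [J s] below is the integral to compute; by parts and by [mean_value_circle_directional],
   [s * J s - PI * s^2 * D] has derivative 0. *)
Lemma RInt_circle_moment p v1 v2 s :
  RInt (fun t => (v1 * cos t + v2 * sin t) * u (circle p s t)) 0 (2 * PI)
  = PI * s * (v1 * dx u p + v2 * dy u p) :> R.
Proof.
  set (w := fun t => v1 * cos t + v2 * sin t).
  set (W := fun t => v1 * sin t - v2 * cos t).
  set (J := fun s => RInt (fun t => w t * u (circle p s t)) 0 (2 * PI) : R).
  set (ut := fun s t => s * (dy u (circle p s t) * cos t - dx u (circle p s t) * sin t)).
  set (D := v1 * dx u p + v2 * dy u p).
  assert (HJ : forall s, is_derive J s (RInt (fun t =>
      w t * (cos t * dx u (circle p s t) + sin t * dy u (circle p s t))) 0 (2 * PI))).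
  { intro s0. apply (is_derive_RInt_paramR (fun s t => w t * u (circle p s t))
      (fun s t => w t * (cos t * dx u (circle p s t) + sin t * dy u (circle p s t)))).
    - intros s1 t. apply is_derive_scalR.
      eapply is_derive_eq; [apply is_derive_circle_radius; auto | Rring].
    - intros s1 t. unfold w, circle. auto_cont.
    - intros s1 t. unfold w, circle. auto_cont. }
  assert (Hrad : forall s0, s0 * RInt (fun t =>
      w t * (cos t * dx u (circle p s0 t) + sin t * dy u (circle p s0 t))) 0 (2 * PI)
      - RInt (fun t => W t * ut s0 t) 0 (2 * PI) = s0 * (2 * PI * D)).
  { intro s0. unfold D.
    rewrite <- (mean_value_circle_directional p v1 v2 s0), <- !RInt_scalR, <- RInt_minusR;
      [| ex_RInt_auto; unfold w, W, ut, circle; auto_cont ..].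
    apply RInt_ext. intros t _. assert (T := sin2_cos2 t). unfold Rsqr in T.
    transitivity (s0 * ((v1 * dx u (circle p s0 t) + v2 * dy u (circle p s0 t))
                        * (sin t * sin t + cos t * cos t))).
    - unfold w, W, ut. Rring.
    - rewrite T. Rring. }
  assert (Hconst : forall s, is_derive (fun s => s * J s - PI * s ^ 2 * D) s 0).
  { intro s0. eapply is_derive_eq.
    - apply is_derive_minusR; [apply is_derive_multR; [apply is_derive_idR | apply HJ]|].
      auto_derive; auto.
    - unfold J, w. rewrite RInt_circle_by_parts. specialize (Hrad s0). unfold w, W, ut in Hrad.
      lra. }
  assert (Hzero := is_derive_0_const _ Hconst s 0). cbv beta in Hzero.
  rewrite Rmult_0_l, pow_i, Rmult_0_r, Rmult_0_l, Rminus_0_r in Hzero by lia.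
  destruct (Req_dec s 0) as [->|Hs].
  - transitivity (RInt (fun t => (v1 * u p) * cos t + (v2 * u p) * sin t) 0 (2 * PI)).
    + apply RInt_ext. intros t _. rewrite circle_0. Rring.
    + rewrite RInt_cos_sin_period. Rring.
  - apply (Rmult_eq_reg_l s); [|exact Hs]. unfold J, w, D in *. lra.
Qed.

Lemma gradient_bound a b c s : 0 < s -> (forall t, 0 <= a * u (circle c s t) + b) ->
  Rabs (a * dx u c) * s <= 2 * (a * u c + b) /\ Rabs (a * dy u c) * s <= 2 * (a * u c + b).
Proof.
  intros Hs Hpos.
  assert (HPI := PI_RGT_0).
  assert (Hmean : RInt (fun t => a * u (circle c s t) + b) 0 (2 * PI)
                  = 2 * PI * (a * u c + b) :> R).
  { rewrite RInt_plusR, RInt_scalR, mean_value_circle, RInt_constR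
      by (auto; ex_RInt_auto; unfold circle; auto_cont).
    Rring. }
  assert (Hdir : forall v1 v2, (forall t, Rabs (v1 * cos t + v2 * sin t) <= 1) ->
      Rabs (a * (v1 * dx u c + v2 * dy u c)) * s <= 2 * (a * u c + b)).
  { intros v1 v2 Hw.
    assert (Hmoment : RInt (fun t => (v1 * cos t + v2 * sin t) * (a * u (circle c s t) + b))
                        0 (2 * PI) = a * (PI * s * (v1 * dx u c + v2 * dy u c)) :> R).
    { rewrite (RInt_ext _ (fun t => a * ((v1 * cos t + v2 * sin t) * u (circle c s t))
                                    + (b * v1 * cos t + b * v2 * sin t))) by (intros; Rring).
      rewrite RInt_plusR, RInt_scalR, RInt_circle_moment, RInt_cos_sin_period
        by (auto; ex_RInt_auto; unfold circle; auto_cont).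
      Rring. }
    assert (B : Rabs (RInt (fun t => (v1 * cos t + v2 * sin t) * (a * u (circle c s t) + b))
                        0 (2 * PI))
                <= RInt (fun t => a * u (circle c s t) + b) 0 (2 * PI)).
    { apply RInt_le_abs_weight; auto; [lra | intro; auto_cont | intro; unfold circle; auto_cont]. }
    rewrite Hmoment, Hmean in B.
    rewrite !Rabs_mult, (Rabs_right PI), (Rabs_right s) in B by lra.
    rewrite Rabs_mult. nra. }
  assert (Hcos : forall t, Rabs (1 * cos t + 0 * sin t) <= 1)
    by (intro t; rewrite Rmult_1_l, Rmult_0_l, Rplus_0_r; apply Rabs_le, COS_bound).
  assert (Hsin : forall t, Rabs (0 * cos t + 1 * sin t) <= 1)
    by (intro t; rewrite Rmult_1_l, Rmult_0_l, Rplus_0_l; apply Rabs_le, SIN_bound).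
  split; [assert (H := Hdir 1 0 Hcos) | assert (H := Hdir 0 1 Hsin)];
    rewrite Rmult_1_l, Rmult_0_l in H; [rewrite Rplus_0_r in H | rewrite Rplus_0_l in H]; exact H.
Qed.

Lemma log_gradient_bound a b z rho c : 0 < rho ->
  (forall w, edist w z <= rho -> 0 <= a * u w + b) -> edist c z <= rho / 2 ->
  Rabs (a * dx u c) <= 4 / rho * (a * u c + b) /\ Rabs (a * dy u c) <= 4 / rho * (a * u c + b).
Proof.
  intros Hrho Hpos Hc.
  destruct (gradient_bound a b c (rho / 2)) as [G1 G2]; [lra| |].
  - intro t. apply Hpos. eapply Rle_trans; [apply (edist_triangle _ c)|].
    rewrite edist_circle, Rabs_right by lra. lra.
  - replace (4 / rho * (a * u c + b)) with (2 * (a * u c + b) / (rho / 2)) by (field; lra).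
    split; apply Rle_div_r; lra.
Qed.

(* Grönwall along the horizontal segment from z to (fst w, snd z), then the vertical one. *)
Lemma harnack a b z rho w : 0 < rho ->
  (forall c, edist c z <= rho -> 0 <= a * u c + b) -> edist w z <= rho / 3 ->
  a * u w + b <= exp 2 * (a * u z + b) /\ a * u z + b <= exp 2 * (a * u w + b).
Proof.
  intros Hrho Hpos Hw.
  set (K := 4 / rho).
  assert (HK : 0 <= K) by (unfold K; apply Rlt_le, Rdiv_lt_0_compat; lra).
  destruct z as [z1 z2], w as [w1 w2].
  assert (HL1 := L1_le_edist (w1, w2) (z1, z2)). simpl in HL1.
  assert (A1 := Rabs_pos (w1 - z1)). assert (A2 := Rabs_pos (w2 - z2)).
  destruct (gronwall_abs (fun t => a * u (t, z2) + b) (fun t => a * dx u (t, z2)) K z1 w1)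
    as [F1 F1'].
  { intros t Ht. assert (Hb := Rabs_between_le _ _ _ Ht). split.
    - eapply is_derive_eq; [apply is_derive_plusR; [apply is_derive_scalR, is_derive_partial_x; auto
                                                   | apply is_derive_constR] | ring].
    - apply (log_gradient_bound a b (z1, z2) rho); auto.
      eapply Rle_trans; [apply edist_le_L1|]. simpl. rewrite Rminus_diag, Rabs_R0. lra. }
  destruct (gronwall_abs (fun t => a * u (w1, t) + b) (fun t => a * dy u (w1, t)) K z2 w2)
    as [F2 F2'].
  { intros t Ht. assert (Hb := Rabs_between_le _ _ _ Ht). split.
    - eapply is_derive_eq; [apply is_derive_plusR; [apply is_derive_scalR, is_derive_partial_y; auto
                                                   | apply is_derive_constR] | ring].
    - apply (log_gradient_bound a b (z1, z2) rho); auto.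
      eapply Rle_trans; [apply edist_le_L1|]. simpl. lra. }
  cbv beta in F1, F1', F2, F2'.
  assert (V0 : 0 <= a * u (z1, z2) + b) by (apply Hpos; rewrite edist_refl; lra).
  assert (V1 : 0 <= a * u (w1, z2) + b).
  { apply Hpos. eapply Rle_trans; [apply edist_le_L1|]. simpl. rewrite Rminus_diag, Rabs_R0. lra. }
  assert (V2 : 0 <= a * u (w1, w2) + b).
  { apply Hpos. eapply Rle_trans; [apply edist_le_L1|]. simpl. lra. }
  assert (EE : exp (K * Rabs (w1 - z1)) * exp (K * Rabs (w2 - z2)) <= exp 2).
  { rewrite <- exp_plus. apply exp_le_exp. unfold K.
    replace (4 / rho * Rabs (w1 - z1) + 4 / rho * Rabs (w2 - z2))
      with (4 * (Rabs (w1 - z1) + Rabs (w2 - z2)) / rho) by (field; lra).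
    apply Rle_div_l; lra. }
  assert (P1 := exp_pos (K * Rabs (w1 - z1))). assert (P2 := exp_pos (K * Rabs (w2 - z2))).
  split.
  - apply Rle_trans with
      (exp (K * Rabs (w2 - z2)) * (exp (K * Rabs (w1 - z1)) * (a * u (z1, z2) + b)));
      [eapply Rle_trans; [exact F2 | apply Rmult_le_compat_l; lra] | nra].
  - apply Rle_trans with
      (exp (K * Rabs (w1 - z1)) * (exp (K * Rabs (w2 - z2)) * (a * u (w1, w2) + b)));
      [eapply Rle_trans; [exact F1' | apply Rmult_le_compat_l; lra] | nra].
Qed.

Lemma liouville_one_sided a b : a <> 0 -> (forall w, 0 <= a * u w + b) ->
  forall p q, u p = u q.
Proof.
  intros Ha Hpos. apply const_of_partials_eq0; [exact partials_u|]. intro c.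
  assert (G := fun s Hs => gradient_bound a b c s Hs (fun t => Hpos (circle c s t))).
  assert (Zx := le_0_of_forall_mul_le _ _ (fun s Hs => proj1 (G s Hs))).
  assert (Zy := le_0_of_forall_mul_le _ _ (fun s Hs => proj2 (G s Hs))).
  assert (Ax := Rabs_pos (a * dx u c)). assert (Ay := Rabs_pos (a * dy u c)).
  split; apply (Rmult_eq_reg_l a); try exact Ha; rewrite Rmult_0_r; apply Rabs_eq_0; lra.
Qed.

Lemma harmonic_unbounded : (exists p q, u p <> u q) ->
  forall B, (exists w, B < u w) /\ (exists w, u w < B).
Proof.
  intros [p [q Hpq]] B. split; apply NNPP; intros Hno; apply Hpq.
  - apply (liouville_one_sided (-1) B); [lra|].
    intro w. destruct (Rle_lt_dec (u w) B); [lra | exfalso; apply Hno; exists w; assumption].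
  - apply (liouville_one_sided 1 (- B)); [lra|].
    intro w. destruct (Rle_lt_dec B (u w)); [lra | exfalso; apply Hno; exists w; assumption].
Qed.

Lemma harmonic_has_zero : (exists p q, u p <> u q) -> exists z, u z = 0.
Proof.
  intros Hnc.
  destruct (proj1 (harmonic_unbounded Hnc 0)) as [p Hp].
  destruct (proj2 (harmonic_unbounded Hnc 0)) as [w Hw].
  destruct (IVT_seg_point u p w cont_u Hp (Rlt_le _ _ Hw)) as [l [_ Hz]].
  exists (seg_point p w l). exact Hz.
Qed.

Lemma harnack_at_zero z r S p : 0 < r -> u z = 0 ->
  (forall w, edist w z < 3 / 4 * r -> u w <= S) -> edist p z < r / 5 -> Rabs (u p) <= 9 * S.
Proof.
  intros Hr Hz HS Hp.
  assert (S0 : 0 <= S) by (rewrite <- Hz; apply HS; rewrite edist_refl; lra).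
  assert (Hup : u p <= S) by (apply HS; lra).
  destruct (harnack (-1) S z (3 * r / 5) p) as [H _]; [lra | | lra |].
  - intros w Hw. assert (u w <= S) by (apply HS; lra). lra.
  - rewrite Hz in H. assert (E := exp_2_le_9). apply Rabs_le. split; nra.
Qed.

Lemma harnack_abs p delta w : 0 < delta -> (forall c, edist c p < delta -> u c <> 0) ->
  edist w p <= delta / 4 -> Rabs (u p) <= 9 * Rabs (u w).
Proof.
  intros Hd Hnz Hw.
  assert (Hsign := no_zero_same_sign u p delta cont_u Hnz).
  destruct (harnack (u p) 0 p (3 * delta / 4) w) as [_ H]; [lra | | lra |].
  { intros c Hc. assert (0 < u p * u c) by (apply Hsign; lra). lra. }
  rewrite !Rplus_0_r in H.
  assert (Hpp : 0 < u p * u p) by (apply Hsign; rewrite edist_refl; lra).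
  assert (Habs : u p * u w <= Rabs (u p) * Rabs (u w)) by (rewrite <- Rabs_mult; apply Rle_abs).
  assert (Hsq : u p * u p = Rabs (u p) * Rabs (u p)) by (rewrite <- Rabs_mult, Rabs_right; lra).
  assert (Hup : 0 < Rabs (u p)) by (apply Rabs_pos_lt; intro E0; rewrite E0 in Hpp; lra).
  assert (E := exp_2_le_9).
  assert (Hprod : 0 <= u p * u w) by (assert (Ee := exp_pos 2); nra).
  apply (Rmult_le_reg_l (Rabs (u p))); [exact Hup|]. rewrite <- Hsq. nra.
Qed.

(** * Doubling discs *)

(* If u had no zero in D(p, d/16), then at the point ws at distance d/64 from p towards z0,
   Harnack's inequality would give |u p| <= 9 |u ws|, while the weight there carries an extra
   factor (65/64)^1200 >= 19 > 2 * 9. *)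
Lemma zero_near_half_maximizer z0 R0 p : u z0 = 0 -> edist p z0 < R0 ->
  0 < weighted u z0 R0 doubling_exponent p ->
  (forall w, edist w z0 <= R0 ->
     weighted u z0 R0 doubling_exponent w < 2 * weighted u z0 R0 doubling_exponent p) ->
  exists z, u z = 0 /\ edist z p < (R0 - edist p z0) / 16.
Proof.
  intros Hz0 HpR Hpos Hmax.
  set (D := edist p z0) in *. set (d := R0 - D).
  assert (Hd : 0 < d) by (unfold d; lra).
  apply NNPP. intros Hno.
  assert (Hnz : forall w, edist w p < d / 16 -> u w <> 0)
    by (intros w Hw Huw; apply Hno; exists w; auto).
  assert (HD : d / 16 <= D).
  { apply Rnot_lt_le. intros HD. apply (Hnz z0); [rewrite edist_sym; exact HD | exact Hz0]. }
  set (ws := seg_point p z0 (d / 64 / D)).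
  assert (Hl : 0 < d / 64 / D < 1).
  { split; [apply Rdiv_lt_0_compat; lra|]. apply (Rmult_lt_reg_r D); [lra|].
    field_simplify; lra. }
  assert (Dws : edist ws p = d / 64).
  { unfold ws. rewrite edist_seg_point_l, Rabs_right, (edist_sym z0) by lra. fold D. field. lra. }
  assert (Dws0 : edist ws z0 = D - d / 64).
  { unfold ws. rewrite edist_seg_point_r, Rabs_right, (edist_sym z0) by lra. fold D. field. lra. }
  assert (Hup := harnack_abs p (d / 16) ws ltac:(lra) Hnz ltac:(lra)).
  assert (Hws : weighted u z0 R0 doubling_exponent ws
                = Rabs (u ws) * d ^ doubling_exponent * (65 / 64) ^ doubling_exponent).
  { unfold weighted. rewrite Dws0, Rmult_assoc, <- Rpow_mult_distr. do 2 f_equal.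
    unfold d. field. }
  assert (Hwp : weighted u z0 R0 doubling_exponent p = Rabs (u p) * d ^ doubling_exponent)
    by reflexivity.
  specialize (Hmax ws ltac:(lra)). rewrite Hws, Hwp in Hmax. rewrite Hwp in Hpos.
  assert (Hda : 0 < d ^ doubling_exponent) by (apply pow_lt; lra).
  set (X := Rabs (u ws) * d ^ doubling_exponent) in Hmax.
  assert (HX : 0 <= X) by (apply Rmult_le_pos; [apply Rabs_pos | lra]).
  assert (Hp9 : Rabs (u p) * d ^ doubling_exponent <= 9 * X)
    by (unfold X; rewrite <- Rmult_assoc; apply Rmult_le_compat_r; lra).
  assert (H19 : 19 * X <= X * (65 / 64) ^ doubling_exponent)
    by (rewrite Rmult_comm; apply Rmult_le_compat_l; [exact HX | apply doubling_exponent_large]).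
  lra.
Qed.

Lemma doubling_disc_of_half_maximizer z0 R0 p : u z0 = 0 -> edist p z0 < R0 ->
  0 < weighted u z0 R0 doubling_exponent p ->
  (forall w, edist w z0 <= R0 ->
     weighted u z0 R0 doubling_exponent w < 2 * weighted u z0 R0 doubling_exponent p) ->
  exists z, doubling_disc u (2 ^ S doubling_exponent) z ((R0 - edist p z0) / 3) p.
Proof.
  intros Hz0 HpR Hpos Hmax.
  destruct (zero_near_half_maximizer z0 R0 p Hz0 HpR Hpos Hmax) as [z [Hz Hzp]].
  set (d := R0 - edist p z0) in *.
  assert (Ed : d = R0 - edist p z0) by reflexivity.
  exists z. split; [lra|]. split; [exact Hz|]. split; [rewrite edist_sym; lra|].
  intros w Hw.
  assert (T1 := edist_triangle w z p). assert (T2 := edist_triangle w p z0).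
  apply (weighted_doubling u z0 R0 doubling_exponent p w); fold d; [lra | lra | apply Hmax; lra].
Qed.

Lemma exists_doubling_disc : (exists p q, u p <> u q) -> forall N,
  exists z r p, doubling_disc u (2 ^ S doubling_exponent) z r p /\ N < Rabs (u p).
Proof.
  intros Hnc N.
  set (K := 2 ^ S doubling_exponent).
  assert (HK : 0 < K) by (apply pow_lt; lra).
  destruct (harmonic_has_zero Hnc) as [z0 Hz0].
  destruct (proj1 (harmonic_unbounded Hnc (K * Rabs N))) as [q Hq].
  assert (HN := Rabs_pos N).
  assert (Hq' : K * Rabs N < Rabs (u q)) by (eapply Rlt_le_trans; [exact Hq | apply Rle_abs]).
  set (R0 := 2 * edist q z0 + 1).
  assert (Dq := edist_ge0 q z0).
  destruct (exists_half_maximizer (fun w => edist w z0 <= R0) (weighted u z0 R0 doubling_exponent))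
    as [p [Sp [Hpos Hmax]]].
  - destruct (bounded_on_disc u z0 R0 cont_u) as [B HB].
    exists (B * R0 ^ doubling_exponent). intros w Hw. unfold weighted.
    assert (Dw := edist_ge0 w z0).
    apply Rmult_le_compat;
      [apply Rabs_pos | apply pow_le; lra | apply HB, Hw | apply pow_incr; lra].
  - exists q. split; [unfold R0; lra|]. unfold weighted.
    apply Rmult_lt_0_compat; [nra | apply pow_lt; unfold R0; lra].
  - cbv beta in Sp, Hmax.
    assert (Dp := edist_ge0 p z0).
    assert (HpR : edist p z0 < R0).
    { destruct (Req_dec (edist p z0) R0) as [E|E]; [|lra].
      unfold weighted in Hpos. rewrite E, Rminus_diag, pow_i in Hpos
        by (unfold doubling_exponent; lia). lra. }
    destruct (doubling_disc_of_half_maximizer z0 R0 p Hz0 HpR Hpos Hmax) as [z Hdisc].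
    exists z, ((R0 - edist p z0) / 3), p. split; [exact Hdisc|].
    assert (Hqp : Rabs (u q) <= K * Rabs (u p)).
    { apply (weighted_doubling u z0 R0 doubling_exponent p q);
        [lra | unfold R0; lra | apply Hmax; unfold R0; lra]. }
    assert (Rabs N < Rabs (u p)) by (apply (Rmult_lt_reg_l K); lra).
    assert (Hle := Rle_abs N). lra.
Qed.

Lemma doubling_disc_M_abs_le K z r p : 0 < K -> doubling_disc u K z r p ->
  Rbar_le (M (fun w => Rabs (u w)) z r) (Rbar_mult (9 * K) (M u z (3 / 4 * r))).
Proof.
  intros HK (Hr & Hz & Hp & Hloc).
  destruct (M u z (3 / 4 * r)) as [S| |] eqn:HM.
  - assert (HS : forall w, edist w z < 3 / 4 * r -> u w <= S).
    { intros w Hw. assert (X := M_ge u z (3 / 4 * r) w Hw). rewrite HM in X. exact X. }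
    assert (H9 := harnack_at_zero z r S p Hr Hz HS Hp).
    apply M_le. intros w Hw. eapply Rle_trans; [apply Hloc, Hw|].
    assert (Habs := Rabs_pos (u p)). nra.
  - rewrite Rbar_mult_pos_p_infty by lra. destruct (M (fun w => Rabs (u w)) z r); simpl; auto.
  - assert (X := M_ge u z (3 / 4 * r) z). rewrite HM in X. destruct X.
    apply in_disc_edist. rewrite edist_refl. lra.
Qed.

Lemma doubling_disc_M_gt K z r p (A : R) : doubling_disc u K z r p -> 9 * A < Rabs (u p) ->
  Rbar_lt A (M u z r).
Proof.
  intros (Hr & Hz & Hp & _) Hbig. apply Rbar_not_le_lt. intros Hle.
  assert (HS : forall w, edist w z < 3 / 4 * r -> u w <= A).
  { intros w Hw. apply (Rbar_le_trans _ _ _ (M_ge u z r w ltac:(apply in_disc_edist; lra)) Hle). }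
  assert (H9 := harnack_at_zero z r A p Hr Hz HS Hp). lra.
Qed.

End Harmonic.

Theorem corollary5 :
  exists C0 : R, 0 < C0 /\
  forall u : R * R -> R,
    harmonic u ->
    (exists p q : R * R, u p <> u q) ->
    exists (z : nat -> R * R) (r : nat -> R),
      (forall n, 0 < r n /\ u (z n) = 0 /\
         Rbar_le (M (fun w => Rabs (u w)) (z n) (r n))
                 (Rbar_mult (Finite C0) (M u (z n) (3 / 4 * r n)))) /\
      (forall A : R, exists N : nat, forall n : nat, (N <= n)%nat ->
         Rbar_lt (Finite A) (M u (z n) (r n))).
Proof.
  set (K := 2 ^ S doubling_exponent).
  assert (HK : 0 < K) by (apply pow_lt; lra).
  exists (9 * K). split; [lra|].
  intros u Hu Hnc.
  destruct (choice (fun (n : nat) (t : R * R * R * (R * R)) =>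
      doubling_disc u K (fst (fst t)) (snd (fst t)) (snd t) /\ 9 * INR n < Rabs (u (snd t))))
    as [T HT].
  { intro n. destruct (exists_doubling_disc u Hu Hnc (9 * INR n)) as (z & r & p & Hd & Hbig).
    exists (z, r, p). split; assumption. }
  exists (fun n => fst (fst (T n))), (fun n => snd (fst (T n))). split.
  - intro n. destruct (HT n) as [Hd _].
    split; [apply Hd|]. split; [apply Hd|].
    apply (doubling_disc_M_abs_le u Hu K _ _ (snd (T n))); auto.
  - intro A. destruct (INR_unbounded A) as [N HN]. exists N. intros n Hn.
    destruct (HT n) as [Hd Hbig]. apply (doubling_disc_M_gt u Hu K _ _ _ A Hd).
    assert (INR N <= INR n) by (apply le_INR; exact Hn). lra.
Qed.
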